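(* Let $k\ge 2$, let $\mathcal{F}\subset 2^{[n]}$ be weakly $k$-cross-free, let $i\geq 0$ be an integer and let $\mathcal{F}_i=\{X\in\mathcal{F}: 2^{i}<|X|\leq 2^{i+1}\}$. If $\mathcal{A}\subset\mathcal{F}_i$ is an antichain (with respect to inclusion), then $|\mathcal{A}|\leq (k-1)n/2^{i}$.
   Context: Two sets $A,B\subset[n]$ are weakly crossing if $A\setminus B$, $B\setminus A$ and $A\cap B$ are all non-empty; a family is weakly $k$-cross-free if it does not contain $k$ pairwise weakly crossing sets. *)

(* Ground set [n] is modelled by 'I_n. *)
From mathcomp Require Import all_boot.
Set Implicit Arguments. Unset Strict Implicit. Unset Printing Implicit Defensive.

Definition weakly_crossing (T : finType) (A B : {set T}) : bool :=
  [&& A :\: B != set0, B :\: A != set0 & A :&: B != set0].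

Definition weakly_k_cross_free (T : finType) (k : nat) (F : {set {set T}}) : Prop :=
  ~ exists G : {set {set T}},
      [/\ G \subset F, #|G| = k &
          {in G &, forall A B, A != B -> weakly_crossing A B}].

Definition antichain (T : finType) (A : {set {set T}}) : Prop :=
  {in A &, forall X Y : {set T}, X \subset Y -> X = Y}.

Definition layer (T : finType) (F : {set {set T}}) (i : nat) : {set {set T}} :=
  [set X in F | (2 ^ i < #|X|) && (#|X| <= 2 ^ i.+1)].

(* Distinct members of an antichain sharing a point weakly cross, so a weakly
   k-cross-free family contains at most k - 1 of them through any point of [n].
   Double counting point-member incidences then gives
   |A| 2^i < sum_(X in A) |X| <= (k - 1) n. *)

From mathcomp Require Import all_boot.

Lemma exists_subset_card {T : finType} {S : {set T}} {k : nat} :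
  k <= #|S| -> exists2 G : {set T}, G \subset S & #|G| = k.
Proof.
move=> leq_k_S; exists [set x in take k (enum S)].
  by apply/subsetP => x; rewrite inE => /mem_take; rewrite mem_enum.
rewrite cardsE (card_uniqP _) ?take_uniq ?enum_uniq //.
by rewrite size_takel // -cardE.
Qed.

Lemma antichain_weakly_crossing (T : finType) (A : {set {set T}}) (X Y : {set T}) (x : T) :
  antichain A -> X \in A -> Y \in A -> X != Y -> x \in X -> x \in Y ->
  weakly_crossing X Y.
Proof.
move=> antiA XA YA neqXY xX xY; apply/and3P; split.
- by rewrite setD_eq0; apply: contra neqXY => /(antiA _ _ XA YA) ->.
- by rewrite setD_eq0; apply: contra neqXY => /(antiA _ _ YA XA) ->.
- by apply/set0Pn; exists x; rewrite inE xX xY.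
Qed.

Lemma antichain_degree_leq (T : finType) (k : nat) (F A : {set {set T}}) (x : T) :
  weakly_k_cross_free k F -> A \subset F -> antichain A ->
  #|[set X in A | x \in X]| <= k - 1.
Proof.
move=> freeF subAF antiA; rewrite leqNgt; apply/negP => ltk.
have lek : k <= #|[set X in A | x \in X]| by case: k freeF ltk => // k _; rewrite subn1.
have [G subG cardG] := exists_subset_card lek.
have GA X : X \in G -> X \in A /\ x \in X.
  by move/(subsetP subG); rewrite inE => /andP[].
apply: freeF; exists G; split => //.
  by apply/subsetP => X /GA[/(subsetP subAF)].
move=> X Y /GA[XA xX] /GA[YA xY] neqXY.
exact: antichain_weakly_crossing antiA XA YA neqXY xX xY.
Qed.

Lemma sum_card_mem (T : finType) (A : {set {set T}}) :
  \sum_(X in A) #|X| = \sum_(x : T) #|[set X in A | x \in X]|.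
Proof.
transitivity (\sum_(X in A) \sum_(x : T | x \in X) 1).
  by apply: eq_bigr => X _; rewrite sum1_card.
rewrite (exchange_big_dep predT) //=.
by apply: eq_bigr => x _; rewrite -sum1_card; apply: eq_bigl => X; rewrite inE.
Qed.

Theorem claim1 (n k : nat) (F : {set {set 'I_n}}) (i : nat) (A : {set {set 'I_n}}) :
  2 <= k ->
  weakly_k_cross_free k F ->
  A \subset layer F i ->
  antichain A ->
  #|A| * 2 ^ i <= (k - 1) * n.
Proof.
move=> _ freeF subA antiA.
have subAF : A \subset F.
  by apply: subset_trans subA _; apply/subsetP => X; rewrite inE => /andP[].
have large_members : #|A| * 2 ^ i <= \sum_(X in A) #|X|.
  rewrite -sum_nat_const; apply: leq_sum => X /(subsetP subA).
  by rewrite inE => /and3P[_ /ltnW].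
apply: leq_trans large_members _; rewrite sum_card_mem.
apply: (@leq_trans (\sum_(x : 'I_n) (k - 1))).
  by apply: leq_sum => x _; exact: antichain_degree_leq freeF subAF antiA.
by rewrite sum_nat_const card_ord mulnC.
Qed.
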